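(* Let $N\ge2$ and ${\bm{p}}\in\Delta_K$ with $p_1\ge p_2\ge\dots\ge p_K>0$. Let ${\bm{q}}^*(N)$ be the minimizer over ${\bm{q}}\in\Delta_K$ of $\sum_kp_k(1-q_k)^N$, let $\beta_N>0$ be such that $q_k^*(N)=\max\{0,1-\beta_Np_k^{-1/(N-1)}\}$ for all $k$, and let $K_N:=\max\{k\in[K]:q_k^*(N)\neq0\}$. Then $$\beta_N=\frac{K_N-1}{\sum_{k=1}^{K_N}p_k^{-1/(N-1)}}\in\left[p_{K_N+1}^{1/(N-1)},\,p_{K_N}^{1/(N-1)}\right),$$ $$K_N=\max\{l\mid f_N(l)<1\},\quad\text{where } f_N(l):=\sum_{k=1}^{l-1}\left(1-\left(\frac{p_l}{p_k}\right)^{1/(N-1)}\right),$$ with the convention $p_{K+1}=0$.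
   Context: $\Delta_K=\{{\bm{r}}\in\mathbb{R}^K:{\bm{r}}\ge0,\ \sum_kr_k=1\}$. The objective is the expected test loss of the memorization model. *)

From HB Require Import structures.
From mathcomp Require Import all_boot all_order all_algebra.
From mathcomp Require Import all_classical all_reals all_analysis.
Set Implicit Arguments. Unset Strict Implicit. Unset Printing Implicit Defensive.
Import Order.TTheory GRing.Theory Num.Theory.
Local Open Scope ring_scope.

(* Vectors in R^K are functions nat -> R, only indices 1..K are meaningful. *)

Definition in_simplex {R : realType} (K : nat) (r : nat -> R) : Prop :=
  (forall k, (1 <= k <= K)%N -> 0 <= r k) /\ \sum_(1 <= k < K.+1) r k = 1.

Definition loss {R : realType} (N K : nat) (p q : nat -> R) : R :=
  \sum_(1 <= k < K.+1) p k * (1 - q k) ^+ N.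

Definition is_minimizer {R : realType} (N K : nat) (p q : nat -> R) : Prop :=
  in_simplex K q /\ forall r, in_simplex K r -> loss N K p q <= loss N K p r.

Definition pext {R : realType} (K : nat) (p : nat -> R) (k : nat) : R :=
  if (k <= K)%N then p k else 0.

Definition KN {R : realType} (K : nat) (q : nat -> R) : nat :=
  \max_(1 <= k < K.+1 | q k != 0) k.

Definition fN {R : realType} (N : nat) (p : nat -> R) (l : nat) : R :=
  \sum_(1 <= k < l) (1 - (p l / p k) `^ ((N.-1)%:R^-1)).

Definition maxl_fN {R : realType} (N K : nat) (p : nat -> R) : nat :=
  \max_(1 <= l < K.+1 | fN N p l < 1) l.

(* Put s_k := p_k^(1/(N-1)), so that q_k = max(0, 1 - beta/s_k). Since s is
   nonincreasing, q_k <> 0 exactly on the prefix k <= K_N where beta < s_k, and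
   sum_k q_k = 1 reads K_N - beta * sum_(k <= K_N) 1/s_k = 1: this is the formula
   for beta, and the bracket s_(K_N+1) <= beta < s_(K_N) is the prefix property.
   f_N(l) = sum_(k < l) (1 - s_l/s_k) is the mass of the same profile at level
   beta = s_l; it is < 1 at l = K_N because beta < s_(K_N), and >= 1 for l > K_N
   because there s_l <= beta. *)

From HB Require Import structures.
From mathcomp Require Import all_boot all_order all_algebra.
From mathcomp Require Import all_classical all_reals all_analysis.
From mathcomp Require Import lra.
Set Implicit Arguments. Unset Strict Implicit. Unset Printing Implicit Defensive.
Import Order.TTheory GRing.Theory Num.Theory.
Local Open Scope ring_scope.

Lemma bigmax_seq_attained (r : seq nat) (P : pred nat) :
  has P r ->
  (\max_(k <- r | P k) k) \in r /\ P (\max_(k <- r | P k) k).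
Proof.
elim: r => //= x r IH; rewrite big_cons inE.
case: ifPn => [Px|NPx /= /IH[rM PM]]; last by rewrite rM orbT.
have [/IH[rM PM] _|NPr _] := boolP (has P r); last by rewrite big_hasC // maxn0 eqxx.
by rewrite /maxn; case: ifP => _; rewrite ?rM ?orbT ?eqxx.
Qed.

Lemma bigmax_nat_prefix (K i : nat) (P : pred nat) :
  (forall k l, (1 <= k)%N -> (k <= l <= K)%N -> P l -> P k) ->
  (1 <= i <= K)%N -> P i ->
  let m := \max_(1 <= k < K.+1 | P k) k in
  (1 <= m <= K)%N /\ forall k, (1 <= k <= K)%N -> P k = (k <= m)%N.
Proof.
move=> P_down iK Pi m.
have memK k : (k \in index_iota 1 K.+1) = (1 <= k <= K)%N.
  by rewrite mem_index_iota ltnS.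
have [mK Pm] : m \in index_iota 1 K.+1 /\ P m.
  by apply: bigmax_seq_attained; apply/hasP; exists i; rewrite ?memK.
rewrite memK in mK; split=> // k kK; apply/idP/idP => [Pk|km].
  by apply: (leq_bigmax_seq (F := id)); rewrite ?memK.
by apply: (P_down k m); rewrite ?km; case/andP: kK; case/andP: mK.
Qed.

Lemma step_nonincr {R : numDomainType} (K : nat) (f : nat -> R) :
  (forall k, (1 <= k < K)%N -> f k.+1 <= f k) ->
  forall k l, (1 <= k)%N -> (k <= l <= K)%N -> f l <= f k.
Proof.
move=> f_step k l k1 /andP[kl lK].
have D_convex : {in [pred n | 1 <= n <= K]%N &,
    forall i j n, (i < n < j)%N -> n \in [pred n | 1 <= n <= K]%N}.
  move=> x y /andP[x1 _] /andP[_ yK] n /andP[xn ny].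
  by rewrite inE (leq_trans x1 (ltnW xn)) (leq_trans (ltnW ny) yK).
apply: (@homo_leq_in R _ f (fun x y => y <= x) (@lexx _ _) _ D_convex) => //.
- by move=> x y z yx zy; apply: le_trans zy yx.
- by move=> n /andP[n1 _] /andP[_ nK]; apply: f_step; rewrite n1.
- by rewrite inE k1 (leq_trans kl lK).
- by rewrite inE (leq_trans k1 kl) lK.
Qed.

Lemma clipE {R : realFieldType} (x y : R) :
  0 < y -> Num.max 0 (1 - x / y) = if x < y then 1 - x / y else 0.
Proof.
move=> y0; case: ifPn => [xy|].
  by rewrite max_r // subr_ge0 ler_pdivrMr // mul1r ltW.
by rewrite -leNgt => yx; rewrite max_l // subr_le0 ler_pdivlMr // mul1r.
Qed.

Lemma clip_gt0 {R : realFieldType} (x y : R) :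
  0 < y -> (0 < Num.max 0 (1 - x / y)) = (x < y).
Proof.
move=> y0; rewrite clipE //; case: ifPn => [xy|_]; last by rewrite ltxx.
by rewrite subr_gt0 ltr_pdivrMr ?mul1r.
Qed.

Lemma powR_div {R : realType} (x y r : R) :
  0 <= x -> 0 <= y -> (x / y) `^ r = x `^ r / y `^ r.
Proof.
move=> x0 y0.
by rewrite powRM ?invr_ge0 // -powR_inv1 // -powRrM mulN1r powRN.
Qed.

Section WaterFilling.
Variables (R : realType) (K : nat) (s : nat -> R) (beta : R) (m : nat).
Hypothesis s_gt0 : forall k, (1 <= k <= K)%N -> 0 < s k.
Hypothesis s_nonincr : forall k l, (1 <= k)%N -> (k <= l <= K)%N -> s l <= s k.
Hypothesis m_range : (1 <= m <= K)%N.
Hypothesis active : forall k, (1 <= k <= K)%N -> (beta < s k) = (k <= m)%N.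

Definition inv_sum (l : nat) : R := \sum_(1 <= k < l) (s k)^-1.

Definition level_mass (l : nat) : R := \sum_(1 <= k < l) (1 - s l / s k).

Lemma level_massE l : level_mass l = l.-1%:R - s l * inv_sum l.
Proof. by rewrite /level_mass sumrB sumr_const_nat subn1 mulr_sumr. Qed.

Lemma inv_sum_ge0 l : (l <= K.+1)%N -> 0 <= inv_sum l.
Proof.
move=> lK; rewrite /inv_sum big_nat_cond sumr_ge0 // => k /andP[/andP[k1 kl] _].
by rewrite invr_ge0 ltW // s_gt0 // k1 -ltnS (leq_trans kl lK).
Qed.

Lemma inv_sum_gt0 : 0 < inv_sum m.+1.
Proof.
case/andP: m_range => m1 mK.
rewrite /inv_sum big_nat_recr //= -/(inv_sum m).
by rewrite ltr_wpDl ?inv_sum_ge0 ?invr_gt0 ?s_gt0 ?m1 // ltnW.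
Qed.

Lemma beta_lt_s : beta < s m.
Proof. by rewrite active. Qed.

Lemma s_le_beta k : (m < k <= K)%N -> s k <= beta.
Proof.
case/andP: m_range => m1 _ /andP[mk kK].
by rewrite leNgt active ?kK ?(leq_trans m1 (ltnW mk)) // -ltnNge.
Qed.

Lemma sum_clip :
  \sum_(1 <= k < K.+1) Num.max 0 (1 - beta / s k) = m%:R - beta * inv_sum m.+1.
Proof.
case/andP: m_range => m1 mK.
rewrite (big_cat_nat _ (n := m.+1)) //= [X in _ + X]big_nat_cond.
rewrite [X in _ + X]big1 ?addr0 => [|k /andP[/andP[mk kK] _]]; last first.
  have k_range : (1 <= k <= K)%N by rewrite (leq_trans m1 (ltnW mk)) -ltnS.
  by rewrite clipE ?s_gt0 // active // leqNgt mk.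
rewrite (eq_big_nat _ _ (F2 := fun k => 1 - beta / s k)) => [|k /andP[k1 km]].
  by rewrite sumrB sumr_const_nat subn1 -mulr_sumr.
have k_range : (1 <= k <= K)%N by rewrite k1 (leq_trans _ mK) // -ltnS.
by rewrite clipE ?s_gt0 // active // -ltnS km.
Qed.

Hypothesis budget : m%:R - beta * inv_sum m.+1 = 1.

Lemma beta_eq : beta = m.-1%:R / inv_sum m.+1.
Proof.
case/andP: m_range => m1 _.
have -> : m.-1%:R = beta * inv_sum m.+1.
  by move: budget; rewrite -[in m%:R](prednK m1) -natr1; lra.
by rewrite mulfK // gt_eqF // inv_sum_gt0.
Qed.

Lemma level_mass_lt1 : level_mass m < 1.
Proof.
case/andP: m_range => m1 mK.
have T_ge0 : 0 <= inv_sum m by rewrite inv_sum_ge0 // ltnW.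
have betaT : beta * inv_sum m <= s m * inv_sum m by rewrite ler_wpM2r // ltW // beta_lt_s.
have beta_sm : beta / s m < 1.
  by rewrite ltr_pdivrMr ?mul1r ?beta_lt_s // s_gt0 // m1.
move: budget; rewrite level_massE /inv_sum big_nat_recr //= -/(inv_sum m) -subn1 natrB //.
lra.
Qed.

Lemma level_mass_ge1 l : (m < l <= K)%N -> 1 <= level_mass l.
Proof.
move=> /[dup] ml_range /andP[ml lK]; case/andP: m_range => m1 _.
have l1 : (1 <= l)%N by rewrite (leq_trans m1 (ltnW ml)).
rewrite /level_mass (big_cat_nat _ (n := m.+1)) //=.
have tail_ge0 : 0 <= \sum_(m.+1 <= k < l) (1 - s l / s k).
  rewrite big_nat_cond sumr_ge0 // => k /andP[/andP[mk kl] _].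
  have k_range : (1 <= k <= K)%N by rewrite (leq_trans m1 (ltnW mk)) (leq_trans (ltnW kl)).
  rewrite subr_ge0 ler_pdivrMr ?mul1r ?s_gt0 //.
  by rewrite s_nonincr ?(ltnW kl) //; case/andP: k_range.
have head : \sum_(1 <= k < m.+1) (1 - s l / s k) = m%:R - s l * inv_sum m.+1.
  by rewrite sumrB sumr_const_nat subn1 mulr_sumr.
have sS : s l * inv_sum m.+1 <= beta * inv_sum m.+1.
  by rewrite ler_wpM2r ?s_le_beta ?ml_range // ltW // inv_sum_gt0.
by rewrite head -[leLHS]addr0 -[in leLHS]budget lerD // lerD2l lerN2.
Qed.

Lemma max_level_mass_lt1 : \max_(1 <= l < K.+1 | level_mass l < 1) l = m.
Proof.
apply/eqP; rewrite eqn_leq; apply/andP; split.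
  apply/bigmax_leqP_seq => l; rewrite mem_index_iota ltnS => /andP[l1 lK].
  by apply: contraTT; rewrite -ltnNge -leNgt => ml; apply: level_mass_ge1; rewrite ml.
by rewrite (leq_bigmax_seq (F := id)) ?level_mass_lt1 // mem_index_iota ltnS.
Qed.

End WaterFilling.

Lemma clip_support (R : realType) (K : nat) (s : nat -> R) (beta : R) :
  (forall k, (1 <= k <= K)%N -> 0 < s k) ->
  (forall k l, (1 <= k)%N -> (k <= l <= K)%N -> s l <= s k) ->
  \sum_(1 <= k < K.+1) Num.max 0 (1 - beta / s k) = 1 ->
  let m := \max_(1 <= k < K.+1 | beta < s k) k in
  [/\ (1 <= m <= K)%N, forall k, (1 <= k <= K)%N -> (beta < s k) = (k <= m)%N
     & m%:R - beta * inv_sum s m.+1 = 1].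
Proof.
move=> s_gt0 s_nonincr clip_sum m.
have [i i_range beta_si] : exists2 i, (1 <= i <= K)%N & beta < s i.
  move: (oner_neq0 R); rewrite -clip_sum psumr_neq0 => [/hasP[i]|k _]; last first.
    by rewrite le_max lexx.
  rewrite mem_index_iota ltnS => i_range /=.
  by rewrite clip_gt0 ?s_gt0 // => beta_si; exists i.
have active_down k l : (1 <= k)%N -> (k <= l <= K)%N -> beta < s l -> beta < s k.
  by move=> k1 kl /lt_le_trans; apply; apply: s_nonincr.
have [m_range active] := bigmax_nat_prefix (P := fun k => beta < s k) active_down i_range beta_si.
by split=> //; rewrite -(sum_clip s_gt0 m_range active).
Qed.

Lemma powR_nonincr (R : realType) (K : nat) (p : nat -> R) (a : R) :
  0 <= a ->
  (forall k, (1 <= k <= K)%N -> 0 < p k) ->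
  (forall k, (1 <= k < K)%N -> p k.+1 <= p k) ->
  forall k l, (1 <= k)%N -> (k <= l <= K)%N -> p l `^ a <= p k `^ a.
Proof.
move=> a_ge0 p_gt0 p_step k l k1 /andP[kl lK]; apply: (ge0_ler_powR a_ge0).
- by rewrite nnegrE ltW // p_gt0 // (leq_trans k1 kl).
- by rewrite nnegrE ltW // p_gt0 // k1 (leq_trans kl).
- by apply: (step_nonincr p_step k1); rewrite kl.
Qed.

Lemma fN_level_mass (R : realType) (N : nat) (p : nat -> R) (l : nat) :
  (forall k, (1 <= k <= l)%N -> 0 < p k) ->
  fN N p l = level_mass (fun k => p k `^ (N.-1)%:R^-1) l.
Proof.
move=> p_gt0; apply: eq_big_nat => k /andP[k1 kl].
have l1 : (1 <= l)%N by rewrite (leq_trans k1 (ltnW kl)).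
by rewrite powR_div ?ltW ?p_gt0 ?l1 ?k1 ?(ltnW kl) ?leqnn.
Qed.

Theorem lemmaA7 (R : realType) (N K : nat) (p q : nat -> R) (beta : R) :
  (2 <= N)%N ->
  in_simplex K p ->
  (forall k, (1 <= k < K)%N -> p k.+1 <= p k) ->
  (forall k, (1 <= k <= K)%N -> 0 < p k) ->
  is_minimizer N K p q ->
  0 < beta ->
  (forall k, (1 <= k <= K)%N ->
     q k = Num.max 0 (1 - beta * p k `^ (- (N.-1)%:R^-1))) ->
  [/\ beta = (KN K q).-1%:R / \sum_(1 <= k < (KN K q).+1) p k `^ (- (N.-1)%:R^-1),
      pext K p (KN K q).+1 `^ ((N.-1)%:R^-1) <= beta,
      beta < p (KN K q) `^ ((N.-1)%:R^-1)
    & KN K q = maxl_fN N K p].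
Proof.
move=> N2 _ p_step p_gt0 [[_ q_sum] _] beta_gt0 q_def.
set a : R := (N.-1)%:R^-1; set s := fun k => p k `^ a.
have a_gt0 : 0 < a by rewrite invr_gt0 ltr0n -ltnS prednK ?(leq_trans _ N2).
have s_gt0 k : (1 <= k <= K)%N -> 0 < s k by move/p_gt0; apply: powR_gt0.
have s_nonincr := powR_nonincr (ltW a_gt0) p_gt0 p_step.
have q_clip k : (1 <= k <= K)%N -> q k = Num.max 0 (1 - beta / s k).
  by move/q_def->; rewrite powRN.
have clip_sum : \sum_(1 <= k < K.+1) Num.max 0 (1 - beta / s k) = 1.
  by rewrite -[RHS]q_sum; apply: eq_big_nat => k; rewrite ltnS => /q_clip ->.
have [] := clip_support s_gt0 s_nonincr clip_sum.
set m := \max_(1 <= k < K.+1 | beta < s k) k => m_range active budget.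
have KN_eq : KN K q = m.
  apply: congr_big_nat => // k; rewrite ltnS => k_range.
  by rewrite q_clip // -clip_gt0 ?s_gt0 // lt_def le_max lexx andbT.
have maxl_eq : maxl_fN N K p = m.
  rewrite -(max_level_mass_lt1 s_gt0 s_nonincr m_range active budget).
  apply: congr_big_nat => // l; rewrite ltnS => /andP[l1 lK].
  by rewrite fN_level_mass // => k /andP[k1 kl]; rewrite p_gt0 // k1 (leq_trans kl).
rewrite KN_eq maxl_eq; split.
- by under eq_bigr do rewrite powRN; exact: beta_eq s_gt0 m_range budget.
- rewrite /pext; case: ifP => [mK|_]; last by rewrite powR0 ?gt_eqF // ltW.
  by apply: (s_le_beta m_range active); rewrite ltnSn.
- exact: beta_lt_s m_range active.
- by [].
Qed.
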